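(* Let $\psi$ be a saturation with saturation level $\alpha>0$ and $u:[0,L]\to\mathbb{R}$ a given velocity. Fix $n$ and suppose $0\le\rho_i^n\le\alpha$ for all $i=1,\dots,M$. If $(\rho_i^{n+1})_{i=1}^M$ satisfies the implicit scheme $$\frac{\rho_i^{n+1}-\rho_i^n}{\Delta t}+\frac{F_{i+1/2}^{n+1}-F_{i-1/2}^{n+1}}{\Delta x}=0,\qquad F_{i+1/2}^{n+1}=\rho_i^{n+1}(\psi_{i+1}^{n+1})^+u_{i+1/2}^++\rho_{i+1}^{n+1}(\psi_i^{n+1})^+u_{i+1/2}^-,$$ with $\psi_i^{n}=\psi(\rho_i^{n})$, $u_{i+1/2}=u(x_{i+1/2})$, and no-flux boundary conditions $F_{1/2}^{n+1}=F_{M+1/2}^{n+1}=0$, then $0\le\rho_i^{n+1}\le\alpha$ for all $i$, for any $\Delta t>0$ and $\Delta x>0$ (unconditionally).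
   Context: A saturation is a continuous function $\psi:[0,\infty)\to\mathbb{R}$ that is non-increasing and for which there is $\alpha>0$ (the saturation level) with $\psi(\alpha)=0$ and $(\alpha-s)\psi(s)>0$ for $s\neq\alpha$. Discretisation of $(0,L)$: $\Delta x=L/M$, cells with centres $x_i=\Delta x(i-1/2)$ and interfaces $x_{i+1/2}$, $i=1,\dots,M$; time step $\Delta t$; $\rho_i^n$ denotes the value on cell $i$ at time $t^n=n\Delta t$. Here $a^+=\max\{a,0\}$ and $a^-=\min\{a,0\}$. (This is a scheme for $\partial_t\rho+\partial_x(\rho\psi(\rho)u(x))=0$.) *)

From Stdlib Require Import Reals Lra Lia.
Open Scope R_scope.

Definition posp (a : R) : R := Rmax a 0.
Definition negp (a : R) : R := Rmin a 0.

Definition continuous_on_nonneg (psi : R -> R) : Prop :=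
  forall s, 0 <= s -> forall eps, 0 < eps ->
    exists delta, 0 < delta /\
      forall t, 0 <= t -> Rabs (t - s) < delta -> Rabs (psi t - psi s) < eps.

(* psi is a saturation with saturation level alpha (all conditions on [0,+oo);
   values of psi on negative reals are unconstrained). *)
Definition saturation (psi : R -> R) (alpha : R) : Prop :=
  0 < alpha /\
  continuous_on_nonneg psi /\
  (forall s t, 0 <= s -> s <= t -> psi t <= psi s) /\
  psi alpha = 0 /\
  (forall s, 0 <= s -> s <> alpha -> (alpha - s) * psi s > 0).

(* Numerical flux F_{i+1/2} at interface x_{i+1/2} = i * dx, i = 0..M,
   for cell values rho : nat -> R (cells indexed 1..M),
   with no-flux boundary conditions F_{1/2} = F_{M+1/2} = 0. *)
Definition num_flux (psi u : R -> R) (dx : R) (M : nat) (rho : nat -> R)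
    (i : nat) : R :=
  if andb (Nat.ltb 0 i) (Nat.ltb i M) then
    rho i * posp (psi (rho (S i))) * posp (u (INR i * dx))
    + rho (S i) * posp (psi (rho i)) * negp (u (INR i * dx))
  else 0.

(* Writing the scheme in conservative form rho1_k - rho0_k = -c (F_k - F_{k-1}) with
   c = dt/dx > 0, both bounds come from the upwind structure of the flux.

   Positivity: across an interface between a nonnegative and a negative cell the flux
   points towards the negative cell.  Summing the increments over the negative cells
   and summing by parts, the total change of mass there is c times a sum of
   nonnegative interface terms, hence nonnegative; but each negative cell lost mass
   relative to rho0 >= 0, a contradiction.

   Upper bound: in a cell with rho1_i > alpha we have psi (rho1_i) < 0, so the factor
   psi(rho1_i)^+ kills every flux entering the cell; it only emits mass, hence
   rho1_i <= rho0_i <= alpha. *)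

From Stdlib Require Import Reals Lra Lia.
Open Scope R_scope.

Lemma posp_ge0 (a : R) : 0 <= posp a.
Proof. unfold posp, Rmax; destruct Rle_dec; lra. Qed.

Lemma negp_le0 (a : R) : negp a <= 0.
Proof. unfold negp, Rmin; destruct Rle_dec; lra. Qed.

Lemma posp_eq0 (a : R) : a <= 0 -> posp a = 0.
Proof. unfold posp, Rmax; destruct Rle_dec; lra. Qed.

Lemma saturation_lt0 (psi : R -> R) (alpha s : R) :
  saturation psi alpha -> alpha < s -> psi s < 0.
Proof.
  intros [Halpha [_ [_ [_ Hsign]]]] Hs.
  pose proof (Hsign s ltac:(lra) ltac:(lra)).
  nra.
Qed.

Lemma increment_of_flux_balance (a b f g dt dx : R) :
  0 < dt -> 0 < dx -> (a - b) / dt + (f - g) / dx = 0 ->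
  a - b = - (dt / dx) * (f - g).
Proof.
  intros Hdt Hdx H.
  apply (Rmult_eq_compat_l dt) in H.
  rewrite Rmult_0_r, Rmult_plus_distr_l in H.
  replace (dt * ((a - b) / dt)) with (a - b) in H by (field; lra).
  replace (- (dt / dx) * (f - g)) with (- (dt * ((f - g) / dx))) by (field; lra).
  lra.
Qed.

Section NumFlux.

Variables (psi u : R -> R) (dx : R) (M : nat) (rho : nat -> R).

Lemma num_flux_boundary (m : nat) : (m = 0 \/ M <= m)%nat ->
  num_flux psi u dx M rho m = 0.
Proof.
  intros Hm; unfold num_flux.
  destruct (Nat.ltb_spec 0 m), (Nat.ltb_spec m M); simpl; auto; lia.
Qed.

Lemma num_flux_interior (m : nat) : (0 < m < M)%nat ->
  num_flux psi u dx M rho m =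
    rho m * posp (psi (rho (S m))) * posp (u (INR m * dx))
    + rho (S m) * posp (psi (rho m)) * negp (u (INR m * dx)).
Proof.
  intros Hm; unfold num_flux.
  destruct (Nat.ltb_spec 0 m), (Nat.ltb_spec m M); simpl; auto; lia.
Qed.

Lemma num_flux_cases (P : R -> Prop) (m : nat) :
  P 0 ->
  P (rho m * posp (psi (rho (S m))) * posp (u (INR m * dx))
     + rho (S m) * posp (psi (rho m)) * negp (u (INR m * dx))) ->
  P (num_flux psi u dx M rho m).
Proof.
  intros H0 Hin.
  destruct (Nat.eq_dec m 0) as [Hm | Hm]; [rewrite num_flux_boundary; auto|].
  destruct (Nat.lt_ge_cases m M).
  - rewrite num_flux_interior by lia; exact Hin.
  - rewrite num_flux_boundary by lia; exact H0.
Qed.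

Lemma num_flux_towards_right (m : nat) :
  0 <= rho m -> rho (S m) < 0 -> 0 <= num_flux psi u dx M rho m.
Proof.
  intros Hm HSm; apply num_flux_cases; [lra|].
  pose proof (posp_ge0 (psi (rho (S m)))); pose proof (posp_ge0 (u (INR m * dx))).
  pose proof (posp_ge0 (psi (rho m))); pose proof (negp_le0 (u (INR m * dx))).
  assert (0 <= rho m * posp (psi (rho (S m))) * posp (u (INR m * dx))).
  { apply Rmult_le_pos; [apply Rmult_le_pos|]; assumption. }
  assert (rho (S m) * posp (psi (rho m)) <= 0) by nra.
  assert (0 <= rho (S m) * posp (psi (rho m)) * negp (u (INR m * dx))) by nra.
  lra.
Qed.

Lemma num_flux_towards_left (m : nat) :
  rho m < 0 -> 0 <= rho (S m) -> num_flux psi u dx M rho m <= 0.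
Proof.
  intros Hm HSm; apply num_flux_cases; [lra|].
  pose proof (posp_ge0 (psi (rho (S m)))); pose proof (posp_ge0 (u (INR m * dx))).
  pose proof (posp_ge0 (psi (rho m))); pose proof (negp_le0 (u (INR m * dx))).
  assert (rho m * posp (psi (rho (S m))) <= 0) by nra.
  assert (rho m * posp (psi (rho (S m))) * posp (u (INR m * dx)) <= 0) by nra.
  assert (0 <= rho (S m) * posp (psi (rho m))) by (apply Rmult_le_pos; assumption).
  assert (rho (S m) * posp (psi (rho m)) * negp (u (INR m * dx)) <= 0) by nra.
  lra.
Qed.

Lemma num_flux_out_of_saturated (m : nat) :
  0 <= rho m -> posp (psi (rho m)) = 0 -> 0 <= num_flux psi u dx M rho m.
Proof.
  intros Hm Hsat; apply num_flux_cases; [lra|].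
  rewrite Hsat, Rmult_0_r, Rmult_0_l, Rplus_0_r.
  apply Rmult_le_pos; [apply Rmult_le_pos|]; auto using posp_ge0.
Qed.

Lemma num_flux_into_saturated (m : nat) :
  0 <= rho (S m) -> posp (psi (rho (S m))) = 0 -> num_flux psi u dx M rho m <= 0.
Proof.
  intros HSm Hsat; apply num_flux_cases; [lra|].
  rewrite Hsat, Rmult_0_r, Rmult_0_l, Rplus_0_l.
  pose proof (posp_ge0 (psi (rho m))); pose proof (negp_le0 (u (INR m * dx))).
  assert (0 <= rho (S m) * posp (psi (rho m))) by (apply Rmult_le_pos; assumption).
  nra.
Qed.

End NumFlux.

Fixpoint sum_cells (f : nat -> R) (m : nat) : R :=
  match m with O => 0 | S m' => sum_cells f m' + f (S m') end.

Lemma sum_cells_ge0 (f : nat -> R) (m : nat) :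
  (forall k, (1 <= k <= m)%nat -> 0 <= f k) -> 0 <= sum_cells f m.
Proof.
  induction m as [|m IH]; intros Hf; simpl; [lra|].
  assert (0 <= f (S m)) by (apply Hf; lia).
  assert (0 <= sum_cells f m) by (apply IH; intros; apply Hf; lia).
  lra.
Qed.

Lemma sum_cells_le_term (f : nat -> R) (m i : nat) :
  (forall k, (1 <= k <= m)%nat -> f k <= 0) -> (1 <= i <= m)%nat ->
  sum_cells f m <= f i.
Proof.
  induction m as [|m IH]; intros Hf Hi; simpl; [lia|].
  destruct (Nat.eq_dec i (S m)) as [-> | Hne].
  - assert (0 <= sum_cells (fun k => - f k) m)
      by (apply sum_cells_ge0; intros k Hk; pose proof (Hf k ltac:(lia)); lra).
    assert (Hopp : forall n, sum_cells (fun k => - f k) n = - sum_cells f n)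
      by (induction n; simpl; lra).
    rewrite Hopp in *; lra.
  - assert (f (S m) <= 0) by (apply Hf; lia).
    assert (sum_cells f m <= f i) by (apply IH; [intros; apply Hf|]; lia).
    lra.
Qed.

Definition neg_indicator (x : R) : R := if Rlt_dec x 0 then 1 else 0.

Section ConservativeUpdate.

Variables (rho0 rho1 F : nat -> R) (c : R) (M : nat).

Hypothesis c_pos : 0 < c.
Hypothesis flux_balance : forall k, (1 <= k <= M)%nat ->
  rho1 k - rho0 k = - c * (F k - F (k - 1)%nat).

Lemma conservative_update_le (k : nat) : (1 <= k <= M)%nat ->
  0 <= F k -> F (k - 1) <= 0 -> rho1 k <= rho0 k.
Proof.
  intros Hk Hout Hin; pose proof (flux_balance k Hk).
  assert (0 <= c * (F k - F (k - 1)%nat)) by (apply Rmult_le_pos; lra).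
  lra.
Qed.

Hypothesis flux_left_end : F 0 = 0.

(* Summation by parts, with F_0 = 0. *)
Lemma weighted_mass_change (s : nat -> R) (m : nat) : (m <= M)%nat ->
  sum_cells (fun k => s k * (rho1 k - rho0 k)) m =
  c * (sum_cells (fun k => F (k - 1)%nat * (s k - s (k - 1)%nat)) m - s m * F m).
Proof.
  induction m as [|m IH]; intros Hm; simpl; [rewrite flux_left_end; ring|].
  rewrite IH, flux_balance by lia.
  rewrite Nat.sub_0_r; replace (S m - 1)%nat with m by lia.
  ring.
Qed.

Hypothesis flux_right_end : F M = 0.
Hypothesis flux_towards_right : forall m, (0 < m < M)%nat ->
  0 <= rho1 m -> rho1 (S m) < 0 -> 0 <= F m.
Hypothesis flux_towards_left : forall m, (0 < m < M)%nat ->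
  rho1 m < 0 -> 0 <= rho1 (S m) -> F m <= 0.

Lemma interface_term_ge0 (k : nat) : (1 <= k <= M)%nat ->
  0 <= F (k - 1)%nat * (neg_indicator (rho1 k) - neg_indicator (rho1 (k - 1)%nat)).
Proof.
  intros Hk.
  destruct (Nat.eq_dec k 1) as [-> | Hk1]; [simpl; rewrite flux_left_end; lra|].
  assert (HS : S (k - 1) = k) by lia.
  pose proof (flux_towards_right (k - 1)%nat) as Hr; pose proof (flux_towards_left (k - 1)%nat) as Hl.
  rewrite HS in Hr, Hl.
  unfold neg_indicator.
  destruct (Rlt_dec (rho1 k) 0), (Rlt_dec (rho1 (k - 1)%nat) 0).
  - lra.
  - pose proof (Hr ltac:(lia) ltac:(lra) ltac:(lra)); lra.
  - pose proof (Hl ltac:(lia) ltac:(lra) ltac:(lra)); lra.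
  - lra.
Qed.

Lemma conservative_update_nonneg :
  (forall k, (1 <= k <= M)%nat -> 0 <= rho0 k) ->
  forall i, (1 <= i <= M)%nat -> 0 <= rho1 i.
Proof.
  intros Hrho0 i Hi.
  destruct (Rlt_dec (rho1 i) 0) as [Hneg | ]; [exfalso | lra].
  set (g k := neg_indicator (rho1 k) * (rho1 k - rho0 k)).
  assert (Hg : forall k, (1 <= k <= M)%nat -> g k <= 0).
  { intros k Hk; pose proof (Hrho0 k Hk).
    unfold g, neg_indicator; destruct Rlt_dec; lra. }
  assert (Hgi : g i < 0).
  { pose proof (Hrho0 i Hi). unfold g, neg_indicator; destruct Rlt_dec; lra. }
  assert (Hmass : 0 <= sum_cells g M).
  { unfold g; rewrite weighted_mass_change, flux_right_end by lia.
    rewrite Rmult_0_r, Rminus_0_r.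
    apply Rmult_le_pos; [lra|].
    apply sum_cells_ge0; exact interface_term_ge0. }
  pose proof (sum_cells_le_term g M i Hg Hi).
  lra.
Qed.

End ConservativeUpdate.

Theorem proposition2p6
  (psi : R -> R) (alpha : R) (u : R -> R) (L dt : R) (M : nat)
  (rho_n rho_n1 : nat -> R) :
  saturation psi alpha ->
  0 < L -> (0 < M)%nat -> 0 < dt ->
  (forall i, (1 <= i <= M)%nat -> 0 <= rho_n i <= alpha) ->
  (forall i, (1 <= i <= M)%nat ->
     (rho_n1 i - rho_n i) / dt
     + (num_flux psi u (L / INR M) M rho_n1 i
        - num_flux psi u (L / INR M) M rho_n1 (i - 1)) / (L / INR M) = 0) ->
  forall i, (1 <= i <= M)%nat -> 0 <= rho_n1 i <= alpha.
Proof.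
  intros Hpsi HL HM Hdt Hn Hscheme.
  set (dx := L / INR M) in Hscheme.
  assert (Hdx : 0 < dx) by (apply Rdiv_lt_0_compat; [exact HL | apply lt_0_INR; lia]).
  set (F := num_flux psi u dx M rho_n1) in Hscheme.
  assert (Hbalance : forall k, (1 <= k <= M)%nat ->
            rho_n1 k - rho_n k = - (dt / dx) * (F k - F (k - 1)%nat))
    by (intros k Hk; apply increment_of_flux_balance; auto).
  assert (Hc : 0 < dt / dx) by (apply Rdiv_lt_0_compat; lra).
  assert (Hnonneg : forall i, (1 <= i <= M)%nat -> 0 <= rho_n1 i).
  { apply (conservative_update_nonneg rho_n rho_n1 F (dt / dx) M Hc Hbalance).
    - apply num_flux_boundary; lia.
    - apply num_flux_boundary; lia.
    - intros m _; apply num_flux_towards_right.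
    - intros m _; apply num_flux_towards_left.
    - intros k Hk; apply Hn, Hk. }
  intros i Hi; split; [auto|].
  destruct (Rle_dec (rho_n1 i) alpha) as [| Hgt]; [assumption | exfalso].
  assert (Hsat : posp (psi (rho_n1 i)) = 0).
  { apply posp_eq0, Rlt_le, (saturation_lt0 psi alpha); [assumption | lra]. }
  assert (HS : S (i - 1) = i) by lia.
  assert (rho_n1 i <= rho_n i).
  { apply (conservative_update_le rho_n rho_n1 F (dt / dx) M); auto.
    - apply num_flux_out_of_saturated; auto.
    - apply num_flux_into_saturated; rewrite HS; auto. }
  pose proof (Hn i Hi); lra.
Qed.
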